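(* Let $(u,v)\in k(x)^n\times k(x)^m$. There exist circuits $c_u\in\mathsf{ACirc}[0,n]$ and $c_v\in\mathsf{ACirc}[m,0]$ such that $[\![c_u]\!]=\{(\bullet,u)\}$ and $[\![c_v]\!]=\{(v,\bullet)\}$.
   Context: Fix a field $k$; $k(x)$ is the field of fractions of polynomials in $x$ over $k$. Circuits: terms built from generators with sorts $(n,m)$: copier $\Delta:(1,2)$, discard $!:(1,0)$, amplifier $\mathsf{s}_r:(1,1)$ ($r\in k$), register $\mathsf{x}:(1,1)$, adder $+:(2,1)$, zero $0:(0,1)$, one $\mathbf{1}:(0,1)$; mirror images $\Delta^{op}:(2,1)$, $!^{op}:(0,1)$, $\mathsf{s}_r^{op}$, $\mathsf{x}^{op}:(1,1)$, $+^{op}:(1,2)$, $0^{op}:(1,0)$, $\mathbf{1}^{op}:(1,0)$; $\mathrm{id}_0:(0,0),\mathrm{id}_1:(1,1),\mathrm{sw}:(2,2)$; closed under sequential composition $;$ and parallel composition $\oplus$. $\mathsf{ACirc}[n,m]$ is the set of circuits of sort $(n,m)$. Denotation: $[\![\Delta]\!]=\{(p,(p,p))\}$, $[\![!]\!]=\{(p,\bullet)\}$, $[\![+]\!]=\{((p,q),p+q)\}$, $[\![0]\!]=\{(\bullet,0)\}$, $[\![\mathbf 1]\!]=\{(\bullet,1)\}$, $[\![\mathsf s_r]\!]=\{(p,rp)\}$, $[\![\mathsf x]\!]=\{(p,px)\}$ ($\bullet$ the unique element of $k(x)^0$); mirrored generators denote converse relations; $\mathrm{id}_1,\mathrm{sw},\mathrm{id}_0$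 denote identity, swap, $\{(\bullet,\bullet)\}$; $;$ is relational composition and $\oplus$ product of relations. *)

From HB Require Import structures.
From mathcomp Require Import all_boot all_algebra.
From mathcomp Require Import fraction.
Set Implicit Arguments. Unset Strict Implicit. Unset Printing Implicit Defensive.
Import GRing.Theory.
Local Open Scope ring_scope.

Section Circuits.
Variable k : fieldType.

Definition kx := {fraction {poly k}}.
Definition xF : kx := FracField.tofrac 'X.

Inductive circ : nat -> nat -> Type :=
| Copy : circ 1 2
| Disc : circ 1 0
| Amp (r : k) : circ 1 1
| Reg : circ 1 1
| Add : circ 2 1
| Zero : circ 0 1
| One : circ 0 1
| CopyOp : circ 2 1
| DiscOp : circ 0 1
| AmpOp (r : k) : circ 1 1
| RegOp : circ 1 1
| AddOp : circ 1 2
| ZeroOp : circ 1 0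
| OneOp : circ 1 0
| Id0 : circ 0 0
| Id1 : circ 1 1
| Sw : circ 2 2
| Seq (n m l : nat) : circ n m -> circ m l -> circ n l
| Par (n1 m1 n2 m2 : nat) : circ n1 m1 -> circ n2 m2 -> circ (n1 + n2) (m1 + m2).

Definition ACirc (n m : nat) := circ n m.

(* vectors of k(x)^n are row vectors 'rV[kx]_n; k(x)^0 has a unique element *)
Definition rv1 (p : kx) : 'rV[kx]_1 := \row_(j < 1) p.
Definition rv2 (p q : kx) : 'rV[kx]_2 :=
  \row_(j < 2) (if j == ord0 then p else q).

Definition rel_copy (a : 'rV[kx]_1) (b : 'rV[kx]_2) : Prop :=
  exists p, a = rv1 p /\ b = rv2 p p.
Definition rel_disc (a : 'rV[kx]_1) (b : 'rV[kx]_0) : Prop := True.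
Definition rel_amp (r : k) (a b : 'rV[kx]_1) : Prop :=
  exists p, a = rv1 p /\ b = rv1 (FracField.tofrac (r%:P) * p).
Definition rel_reg (a b : 'rV[kx]_1) : Prop :=
  exists p, a = rv1 p /\ b = rv1 (p * xF).
Definition rel_add (a : 'rV[kx]_2) (b : 'rV[kx]_1) : Prop :=
  exists p q, a = rv2 p q /\ b = rv1 (p + q).
Definition rel_zero (a : 'rV[kx]_0) (b : 'rV[kx]_1) : Prop := b = rv1 0.
Definition rel_one (a : 'rV[kx]_0) (b : 'rV[kx]_1) : Prop := b = rv1 1.
Definition rel_id (n : nat) (a b : 'rV[kx]_n) : Prop := b = a.
Definition rel_sw (a b : 'rV[kx]_2) : Prop :=
  exists p q, a = rv2 p q /\ b = rv2 q p.

Fixpoint sem (n m : nat) (c : circ n m) : 'rV[kx]_n -> 'rV[kx]_m -> Prop :=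
  match c in circ n m return 'rV[kx]_n -> 'rV[kx]_m -> Prop with
  | Copy => rel_copy
  | Disc => rel_disc
  | Amp r => rel_amp r
  | Reg => rel_reg
  | Add => rel_add
  | Zero => rel_zero
  | One => rel_one
  | CopyOp => fun a b => rel_copy b a
  | DiscOp => fun a b => rel_disc b a
  | AmpOp r => fun a b => rel_amp r b a
  | RegOp => fun a b => rel_reg b a
  | AddOp => fun a b => rel_add b a
  | ZeroOp => fun a b => rel_zero b a
  | OneOp => fun a b => rel_one b a
  | Id0 => fun _ _ => True
  | Id1 => @rel_id 1
  | Sw => rel_sw
  | Seq _ _ _ c1 c2 => fun a b => exists w, sem c1 a w /\ sem c2 w b
  | Par _ _ _ _ c1 c2 => fun a b =>
      sem c1 (lsubmx a) (lsubmx b) /\ sem c2 (rsubmx a) (rsubmx b)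
  end.

End Circuits.

From mathcomp Require Import all_boot all_algebra.
From mathcomp Require Import fraction.
From Stdlib Require Import Setoid.
Set Implicit Arguments. Unset Strict Implicit. Unset Printing Implicit Defensive.
Import GRing.Theory.
Local Open Scope ring_scope.

(* Every element of k(x) is p/q with polynomials p, q and q != 0. Multiplication
   by a polynomial is a circuit, built by Horner's scheme from registers,
   amplifiers, copiers and adders; feeding it the constant 1 produces the
   polynomial itself. For the quotient p/q, a mirrored discard emits an
   arbitrary w, which is copied; one copy is output and the other is forced to
   satisfy q w = p by the mirror image of the circuit producing p, so w = p/q.
   Vectors are obtained by juxtaposing scalar circuits, and the circuit for v
   is the mirror image of one producing v, since mirroring a circuit takes
   its denotation to the converse relation. *)

Local Notation "p %:F" := (FracField.tofrac p).

Lemma fraction_numden (R : idomainType) (f : {fraction R}) :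
  exists p q, q != 0 /\ f = p%:F / q%:F.
Proof.
elim/quotW: f => x.
exists \n_x, \d_x; split; first exact: denom_ratioP.
have d_neq0 : (\d_x)%:F != 0 by rewrite tofrac_eq0 denom_ratioP.
apply: (mulIf d_neq0); rewrite divfK //.
unlock FracField.tofrac; rewrite -[_ * _]/(FracField.mul _ _) -FracField.pi_mul.
apply/eqmodP; rewrite /= FracField.equivfE /FracField.mulf.
by rewrite !numden_Ratio ?mulf_neq0 ?oner_neq0 ?denom_ratioP // !mulr1 mulrC.
Qed.

Section Circuits.
Variable k : fieldType.
Local Notation F := (kx k).

Fixpoint mirror n m (c : circ k n m) : circ k m n :=
  match c in circ _ n m return circ k m n with
  | Copy => CopyOp k | Disc => DiscOp k | Amp r => AmpOp r | Reg => RegOp k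
  | Add => AddOp k | Zero => ZeroOp k | One => OneOp k
  | CopyOp => Copy k | DiscOp => Disc k | AmpOp r => Amp r | RegOp => Reg k
  | AddOp => Add k | ZeroOp => Zero k | OneOp => One k
  | Id0 => Id0 k | Id1 => Id1 k | Sw => Sw k
  | Seq _ _ _ c1 c2 => Seq (mirror c2) (mirror c1)
  | Par _ _ _ _ c1 c2 => Par (mirror c1) (mirror c2)
  end.

Lemma sem_mirror n m (c : circ k n m) a b : sem (mirror c) a b <-> sem c b a.
Proof.
elim: c a b => //= [a b|a b|n1 m1 l c1 IH1 c2 IH2 a b|n1 m1 n2 m2 c1 IH1 c2 IH2 a b].
- by rewrite /rel_id; split=> ->.
- by split=> -[p [q [-> ->]]]; exists q, p.
- by split=> -[w [H1 H2]]; exists w; rewrite IH1 IH2 in H1 H2 *.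
- by rewrite IH1 IH2.
Qed.

Lemma sem_seq n m l (c1 : circ k n m) (c2 : circ k m l) a b :
  sem (Seq c1 c2) a b <-> exists w, sem c1 a w /\ sem c2 w b.
Proof. by []. Qed.

Lemma sem_par n1 m1 n2 m2 (c1 : circ k n1 m1) (c2 : circ k n2 m2) a b :
  sem (Par c1 c2) a b <->
  sem c1 (lsubmx a) (lsubmx b) /\ sem c2 (rsubmx a) (rsubmx b).
Proof. by []. Qed.

Definition denotes_fun n m (c : circ k n m) (f : 'rV[F]_n -> 'rV[F]_m) :=
  forall a b, sem c a b <-> b = f a.

Lemma eq_denotes_fun n m (c : circ k n m) f g :
  f =1 g -> denotes_fun c f -> denotes_fun c g.
Proof. by move=> fg cf a b; rewrite cf fg. Qed.

Lemma sem_seq_funl n m (c1 : circ k n m) f : denotes_fun c1 f ->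
  forall l (c2 : circ k m l) a b, sem (Seq c1 c2) a b <-> sem c2 (f a) b.
Proof.
move=> c1f l c2 a b; rewrite sem_seq.
by split=> [[w]|]; [rewrite c1f => -[->] | exists (f a); rewrite c1f].
Qed.

Lemma denotes_fun_seq n m l (c1 : circ k n m) (c2 : circ k m l) f1 f2 :
  denotes_fun c1 f1 -> denotes_fun c2 f2 -> denotes_fun (Seq c1 c2) (f2 \o f1).
Proof. by move=> c1f1 c2f2 a b; rewrite (sem_seq_funl c1f1) c2f2. Qed.

Lemma denotes_fun_par n1 m1 n2 m2 (c1 : circ k n1 m1) (c2 : circ k n2 m2) f1 f2 :
  denotes_fun c1 f1 -> denotes_fun c2 f2 ->
  denotes_fun (Par c1 c2) (fun a => row_mx (f1 (lsubmx a)) (f2 (rsubmx a))).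
Proof.
move=> c1f1 c2f2 a b; rewrite sem_par c1f1 c2f2.
split=> [[<- <-]|->]; first by rewrite hsubmxK.
by rewrite row_mxKl row_mxKr.
Qed.

Lemma rv1K (a : 'rV[F]_1) : rv1 (a 0 0) = a.
Proof. by apply/rowP => j; rewrite !mxE ord1. Qed.

Lemma rv1D (p q : F) : rv1 (p + q) = rv1 p + rv1 q.
Proof. by apply/rowP => j; rewrite !mxE. Qed.

Lemma scale_rv1 (g p : F) : g *: rv1 p = rv1 (g * p).
Proof. by apply/rowP => j; rewrite !mxE. Qed.

Lemma rv2E (p q : F) : rv2 p q = row_mx (rv1 p) (rv1 q).
Proof.
apply/rowP => j; rewrite !mxE.
by case: splitP => i; rewrite !mxE ord1 -val_eqE /= => ->.
Qed.

Lemma lsubmx_rV1 (b : 'rV[F]_(1 + 0)) : lsubmx b = b.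
Proof. by apply/rowP => j; rewrite mxE; congr (b _ _); apply: val_inj. Qed.

Lemma denotes_copy : denotes_fun (Copy k) (fun a => row_mx a a).
Proof.
move=> a b; split=> [[p [-> ->]]|->]; first by rewrite rv2E.
by exists (a 0 0); rewrite rv2E rv1K.
Qed.

Lemma denotes_amp (r : k) : denotes_fun (Amp r) ( *:%R r%:P%:F).
Proof.
move=> a b; split=> [[p [-> ->]]|->]; first by rewrite scale_rv1.
by exists (a 0 0); rewrite -scale_rv1 rv1K.
Qed.

Lemma denotes_reg : denotes_fun (Reg k) ( *:%R (xF k)).
Proof.
move=> a b; split=> [[p [-> ->]]|->]; first by rewrite scale_rv1 mulrC.
by exists (a 0 0); rewrite mulrC -scale_rv1 rv1K.
Qed.

Lemma denotes_add : denotes_fun (Add k) (fun a : 'rV_(1 + 1) => lsubmx a + rsubmx a).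
Proof.
move=> a b; split=> [[p [q [-> ->]]]|->].
  by rewrite rv2E row_mxKl row_mxKr rv1D.
by exists (lsubmx (a : 'rV_(1 + 1)) 0 0), (rsubmx (a : 'rV_(1 + 1)) 0 0);
  rewrite rv2E rv1D !rv1K hsubmxK.
Qed.

Lemma denotes_scaling_horner (g : F) (r : k) (cg : circ k 1 1) :
  denotes_fun cg ( *:%R g) ->
  denotes_fun (Seq (Copy k) (Seq (Par (Seq cg (Reg k)) (Amp r)) (Add k)))
              ( *:%R (g * xF k + r%:P%:F)).
Proof.
move=> cgg; apply: eq_denotes_fun (denotes_fun_seq denotes_copy
  (denotes_fun_seq (denotes_fun_par (denotes_fun_seq cgg denotes_reg)
                                    (denotes_amp r)) denotes_add)) => a /=.
by rewrite !(row_mxKl, row_mxKr) scalerA scalerDl mulrC.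
Qed.

Lemma denotes_scaling_poly (q : {poly k}) :
  exists c : circ k 1 1, denotes_fun c ( *:%R q%:F).
Proof.
elim/poly_ind: q => [|q r [c cq]].
  by exists (Amp 0); rewrite -polyC0; apply: denotes_amp.
exists (Seq (Copy k) (Seq (Par (Seq c (Reg k)) (Amp r)) (Add k))).
by rewrite rmorphD rmorphM; apply: denotes_scaling_horner.
Qed.

Lemma denotes_state_poly (p : {poly k}) :
  exists c : circ k 0 1, denotes_fun c (fun _ => rv1 p%:F).
Proof.
have [c cp] := denotes_scaling_poly p.
have denotes_one : denotes_fun (One k) (fun _ => rv1 1) by [].
exists (Seq (One k) c); apply: eq_denotes_fun (denotes_fun_seq denotes_one cp) => a /=.
by rewrite scale_rv1 mulr1.
Qed.

Lemma denotes_state_div (g h : F) (cg : circ k 1 1) (ch : circ k 0 1) :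
  g != 0 -> denotes_fun cg ( *:%R g) -> denotes_fun ch (fun _ => rv1 h) ->
  denotes_fun (Seq (DiscOp k) (Seq (Copy k) (Par (Id1 k) (Seq cg (mirror ch)))))
              (fun _ => rv1 (h / g)).
Proof.
move=> g_neq0 cgg chh a b; rewrite sem_seq.
have solve_w (w : 'rV_1) : sem (Seq cg (mirror ch)) w (rsubmx b) <-> w = rv1 (h / g).
  rewrite (sem_seq_funl cgg) sem_mirror chh.
  split=> [gw|->]; last by rewrite scale_rv1 mulrC divfK.
  by rewrite -[w](scalerK g_neq0) gw scale_rv1 mulrC.
split=> [[w [_]]|bE].
  rewrite (sem_seq_funl denotes_copy) (sem_par (Id1 k)) row_mxKr solve_w => -[].
  by rewrite /rel_id lsubmx_rV1 row_mxKl => -> ->.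
exists (rv1 (h / g)); split=> //.
rewrite (sem_seq_funl denotes_copy) (sem_par (Id1 k)) row_mxKr solve_w.
by rewrite /rel_id row_mxKl lsubmx_rV1 bE.
Qed.

Lemma denotes_state_scalar (f : F) :
  exists c : circ k 0 1, denotes_fun c (fun _ => rv1 f).
Proof.
have [p [q [q_neq0 ->]]] := fraction_numden f.
have [cq cqq] := denotes_scaling_poly q.
have [cp cpp] := denotes_state_poly p.
by eexists; apply: denotes_state_div cqq cpp; rewrite tofrac_eq0.
Qed.

Lemma denotes_state n (u : 'rV[F]_n) :
  exists c : circ k 0 n, denotes_fun c (fun _ => u).
Proof.
elim: n u => [|n IHn] u.
  by exists (Id0 k) => a b; rewrite (thinmx0 b) (thinmx0 u).
have [c1 c1u] := denotes_state_scalar (lsubmx (u : 'rV_(1 + n)) 0 0).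
have [c2 c2u] := IHn (rsubmx (u : 'rV_(1 + n))).
exists (Par c1 c2); apply: eq_denotes_fun (denotes_fun_par c1u c2u) => a /=.
by rewrite rv1K hsubmxK.
Qed.

End Circuits.

Theorem proposition2 (k : fieldType) (n m : nat)
    (u : 'rV[kx k]_n) (v : 'rV[kx k]_m) :
  exists (cu : ACirc k 0 n) (cv : ACirc k m 0),
    (forall (a : 'rV[kx k]_0) (b : 'rV[kx k]_n), sem cu a b <-> b = u) /\
    (forall (a : 'rV[kx k]_m) (b : 'rV[kx k]_0), sem cv a b <-> a = v).
Proof.
have [cu cuu] := denotes_state u.
have [cv cvv] := denotes_state v.
by exists cu, (mirror cv); split=> // a b; rewrite sem_mirror cvv.
Qed.
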